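(* Let $\mathcal{S}_1$ be the set of integer strings obtainable from $[4]$ by iterating the operations $$[c_1,\dots,c_k]\mapsto[c_1+1,\dots,c_k,2]\quad\text{or}\quad[c_1,\dots,c_k]\mapsto[2,c_1,\dots,c_k+1].$$ Let $\mathcal{S}_2$ be the set of strings obtainable from $[4]=[2+2]$ by iterating the operations $$[a_1,\dots,a_{k-1},a_k+b_l,b_{l-1},\dots,b_1]\mapsto[a_1,\dots,a_{k-1},(a_k+1)+2,b_l,b_{l-1},\dots,b_1]$$ or $$[a_1,\dots,a_{k-1},a_k+b_l,b_{l-1},\dots,b_1]\mapsto[a_1,\dots,a_{k-1},a_k,2+(b_l+1),b_{l-1},\dots,b_1].$$ Then $\mathcal{S}_1=\mathcal{S}_2$, and this set equals the set of Hirzebruch–Jung continued fraction expansions (with all entries $\ge2$) of the rationals $$\left\{\frac{p^2}{pq-1}\,:\,p>q>0,\ \gcd(p,q)=1\right\}.$$ Similarly, the set of Hirzebruch–Jung continued fraction expansions of $$\left\{\frac{p^2}{pq+1}\,:\,p>q>0,\ \gcd(p,q)=1\right\}$$ is obtained from $[2,2,2]$ in either of two ways. The first is by iterating $$[c_1,\dots,c_k]\mapsto[c_1+1,\dots,c_k,2]\quad\text{or}\quad[2,c_1,\dots,c_k+1].$$ The second is by iterating $$[a_1,\dots,a_{k-1},a_k,2,b_l,b_{l-1},\dots,b_1]\mapsto[a_1,\dots,a_{k-1},(a_k+1),2,2,b_l,b_{l-1},\dots,b_1]$$ or $$[a_1,\dots,a_{k-1},a_k,2,b_l,b_{l-1}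,\dots,b_1]\mapsto[a_1,\dots,a_{k-1},a_k,2,2,(b_l+1),b_{l-1},\dots,b_1].$$
   Context: Hirzebruch–Jung continued fractions: $[c_1,\dots,c_n]:=c_1-\cfrac{1}{c_2-\cfrac{1}{\ddots-\cfrac{1}{c_n}}}$, with all $c_i\ge2$ (the expansion of a rational $>1$ is then unique). In the rules for $\mathcal{S}_2$, a string is written as $[a_1,\dots,a_{k-1},a_k+b_l,b_{l-1},\dots,b_1]$. Here $p/q=[a_1,\dots,a_k]$ and $p/(p-q)=[b_1,\dots,b_l]$ for the corresponding coprime pair $p>q$, so that a distinguished middle entry equals $a_k+b_l$. The rules act on this decomposition, keeping track of $a_k$ and $b_l$ separately. The same applies to the decomposition $[a_1,\dots,a_k,2,b_l,\dots,b_1]$ in the second part. *)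

From mathcomp Require Import all_boot all_order all_algebra.
Set Implicit Arguments. Unset Strict Implicit. Unset Printing Implicit Defensive.
Import Order.TTheory GRing.Theory Num.Theory.

(* Hirzebruch-Jung continued fraction [c1,...,cn] = c1 - 1/(c2 - 1/(... - 1/cn)),
   evaluated in rat.  The empty string (never used) is sent to 0. *)
Fixpoint hj (s : seq nat) : rat :=
  match s with
  | [::] => 0
  | c :: t => if t is [::] then (c%:R)%R else (c%:R - (hj t)^-1)%R
  end.

Definition hj_string (s : seq nat) : bool := (s != [::]) && all (fun c => 2 <= c) s.

Definition incr_head (s : seq nat) : seq nat :=
  if s is x :: t then x.+1 :: t else [::].
Definition incr_last (s : seq nat) : seq nat := rev (incr_head (rev s)).

Definition opL (s : seq nat) : seq nat := rcons (incr_head s) 2.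
Definition opR (s : seq nat) : seq nat := 2 :: incr_last s.

Inductive gen1 (s0 : seq nat) : seq nat -> Prop :=
| gen1_start : gen1 s0 s0
| gen1_L s : gen1 s0 s -> gen1 s0 (opL s)
| gen1_R s : gen1 s0 s -> gen1 s0 (opR s).

(* Decomposition states (a, b) with a = [a_1..a_k], b = [b_1..b_l].
   Moves: (a,b) |-> (a with a_k+1, b ++ [2])  and  (a,b) |-> (a ++ [2], b with b_l+1). *)
Inductive genAB : seq nat -> seq nat -> Prop :=
| genAB_start : genAB [:: 2] [:: 2]
| genAB_1 a b : genAB a b -> genAB (incr_last a) (rcons b 2)
| genAB_2 a b : genAB a b -> genAB (rcons a 2) (incr_last b).

(* [a_1,...,a_{k-1}, a_k + b_l, b_{l-1},...,b_1] *)
Definition str_mid (a b : seq nat) : seq nat :=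
  take (size a).-1 a ++ (last 0 a + last 0 b) :: rev (take (size b).-1 b).

Definition str_two (a b : seq nat) : seq nat := a ++ 2 :: rev b.

Definition S1 (s : seq nat) : Prop := gen1 [:: 4] s.
Definition S2 (s : seq nat) : Prop := exists a b, genAB a b /\ s = str_mid a b.
Definition T1 (s : seq nat) : Prop := gen1 [:: 2; 2; 2] s.
Definition T2 (s : seq nat) : Prop := exists a b, genAB a b /\ s = str_two a b.

Definition HJminus (s : seq nat) : Prop :=
  hj_string s /\ exists p q : nat, [/\ 0 < q, q < p, coprime p q &
     hj s = ((p ^ 2)%:R / ((p * q)%:R - 1))%R].
Definition HJplus (s : seq nat) : Prop :=
  hj_string s /\ exists p q : nat, [/\ 0 < q, q < p, coprime p q &
     hj s = ((p ^ 2)%:R / ((p * q)%:R + 1))%R].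

From mathcomp Require Import all_boot all_order all_algebra.
From mathcomp Require Import ring lra zify.
Set Implicit Arguments. Unset Strict Implicit. Unset Printing Implicit Defensive.
Import Order.TTheory GRing.Theory Num.Theory.

(* A decomposition (a, b) of a string is grown at the back by [genAB], whereas
   [opL] and [opR] grow it at the front; both give the same pairs because [genAB]
   is invariant under reversing both components, whence S1 = S2 and T1 = T2.
   Writing [hj s] as the ratio of the first column of the product of the matrices
   [[c, -1], [1, 0]], c in s, the operations [opL] and [opR] multiply this product
   by fixed matrices on both sides.  They send the matrix of p^2/(pq+e) (e = -1 or
   1) with p = q + r to those of the pairs (q, q + r) and (q + r, r): these are
   the Calkin-Wilf moves, which generate every coprime pair from (1, 1).  Since
   HJ expansions are unique, the strings reached are exactly those of the family. *)

Lemma rev_eq0 (T : eqType) (s : seq T) : (rev s == [::]) = (s == [::]).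
Proof. by rewrite -!size_eq0 size_rev. Qed.

Lemma rcons_neq0 (T : eqType) (s : seq T) x : rcons s x != [::].
Proof. by case: s. Qed.

Lemma incr_last_rcons s x : incr_last (rcons s x) = rcons s x.+1.
Proof. by rewrite /incr_last rev_rcons rev_cons revK. Qed.

Lemma rev_incr_last s : rev (incr_last s) = incr_head (rev s).
Proof. by rewrite /incr_last revK. Qed.

Lemma incr_head_eq0 s : (incr_head s == [::]) = (s == [::]).
Proof. by case: s. Qed.

Lemma incr_last_eq0 s : (incr_last s == [::]) = (s == [::]).
Proof. by rewrite /incr_last rev_eq0 incr_head_eq0 rev_eq0. Qed.

Lemma incr_head_rcons s x : s != [::] -> incr_head (rcons s x) = rcons (incr_head s) x.
Proof. by case: s. Qed.

Lemma incr_last_cons x s : s != [::] -> incr_last (x :: s) = x :: incr_last s.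
Proof.
move=> s0; rewrite /incr_last rev_cons incr_head_rcons ?rev_eq0 //.
by rewrite rev_rcons.
Qed.

Lemma incr_head_incr_last s : incr_head (incr_last s) = incr_last (incr_head s).
Proof.
case/lastP: s => [|s x] //; rewrite incr_last_rcons.
by case: s => [|y s] //=; rewrite -!rcons_cons incr_last_rcons.
Qed.

Lemma opR_rev s : opR s = rev (opL (rev s)).
Proof. by rewrite /opR /opL rev_rcons -rev_incr_last revK. Qed.

Lemma genAB_neq0 a b : genAB a b -> a != [::] /\ b != [::].
Proof. by elim=> // {}a {}b _ [a0 b0]; rewrite ?incr_last_eq0 ?rcons_neq0. Qed.

Lemma genAB_sym a b : genAB a b -> genAB b a.
Proof. by elim=> *; [exact: genAB_start | exact: genAB_2 | exact: genAB_1]. Qed.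

Lemma genAB_incr_head_cons a b : genAB a b -> genAB (incr_head a) (2 :: b).
Proof.
elim=> [|{}a {}b _ IH|{}a {}b ab IH]; first exact: (genAB_1 genAB_start).
  by rewrite incr_head_incr_last -rcons_cons; apply: genAB_1.
have [a0 b0] := genAB_neq0 ab.
by rewrite incr_head_rcons // -(incr_last_cons 2 b0); apply: genAB_2.
Qed.

Lemma genAB_cons_incr_head a b : genAB a b -> genAB (2 :: a) (incr_head b).
Proof. by move/genAB_sym/genAB_incr_head_cons/genAB_sym. Qed.

Lemma genAB_rev a b : genAB a b -> genAB (rev a) (rev b).
Proof.
elim=> [|{}a {}b _ IH|{}a {}b _ IH]; first exact: genAB_start.
  by rewrite rev_incr_last rev_rcons; apply: genAB_incr_head_cons.
by rewrite rev_incr_last rev_rcons; apply: genAB_cons_incr_head.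
Qed.

Section StringsOfPairs.

Variable f : seq nat -> seq nat -> seq nat.
Hypothesis rev_f : forall a b, rev (f a b) = f b a.
Hypothesis opL_f : forall a b, a != [::] -> b != [::] ->
  opL (f a b) = f (incr_head a) (2 :: b).

Lemma opR_f a b : a != [::] -> b != [::] -> opR (f a b) = f (2 :: a) (incr_head b).
Proof. by move=> a0 b0; rewrite opR_rev rev_f opL_f // rev_f. Qed.

Lemma gen1_genAB s : gen1 (f [:: 2] [:: 2]) s <-> exists a b, genAB a b /\ s = f a b.
Proof.
split.
  elim=> [|{}s _ [a [b [ab ->]]]|{}s _ [a [b [ab ->]]]].
  - by exists [:: 2], [:: 2]; split=> //; apply: genAB_start.
  - have [a0 b0] := genAB_neq0 ab.
    exists (incr_head a), (2 :: b); rewrite opL_f //.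
    by split=> //; apply: genAB_incr_head_cons.
  - have [a0 b0] := genAB_neq0 ab.
    exists (2 :: a), (incr_head b); rewrite opR_f //.
    by split=> //; apply: genAB_cons_incr_head.
case=> a [b [/genAB_rev ab ->]]; rewrite -(revK a) -(revK b).
elim: ab => [|{}a {}b ab IH|{}a {}b ab IH]; first exact: gen1_start.
- have [a0 b0] := genAB_neq0 ab.
  rewrite rev_incr_last rev_rcons -opL_f ?rev_eq0 //; exact: gen1_L.
- have [a0 b0] := genAB_neq0 ab.
  rewrite rev_incr_last rev_rcons -opR_f ?rev_eq0 //; exact: gen1_R.
Qed.

End StringsOfPairs.

Lemma str_mid_rcons a x b y : str_mid (rcons a x) (rcons b y) = a ++ (x + y) :: rev b.
Proof. by rewrite /str_mid !size_rcons -!cats1 !take_size_cat // !last_cat. Qed.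

Lemma rev_str_mid a b : rev (str_mid a b) = str_mid b a.
Proof. by rewrite /str_mid rev_cat rev_cons revK -cats1 -catA addnC. Qed.

Lemma opL_str_mid a b : a != [::] -> b != [::] ->
  opL (str_mid a b) = str_mid (incr_head a) (2 :: b).
Proof.
case/lastP: a => // a x _; case/lastP: b => // b y _.
rewrite str_mid_rcons /opL -rcons_cons.
case: a => [|z a].
  by rewrite -[incr_head (rcons _ _)]/(rcons [::] x.+1) str_mid_rcons rev_cons.
rewrite -[incr_head (rcons _ _)]/(rcons (z.+1 :: a) x) str_mid_rcons /=.
by rewrite rcons_cat rev_cons.
Qed.

Lemma rev_str_two a b : rev (str_two a b) = str_two b a.
Proof. by rewrite /str_two rev_cat rev_cons revK -cats1 -catA. Qed.

Lemma opL_str_two a b : a != [::] -> opL (str_two a b) = str_two (incr_head a) (2 :: b).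
Proof. by case: a => // z a _; rewrite /opL /str_two /= rcons_cat rev_cons. Qed.

Lemma S1_S2 s : S1 s <-> S2 s.
Proof. exact: (gen1_genAB rev_str_mid opL_str_mid). Qed.

Lemma T1_T2 s : T1 s <-> T2 s.
Proof. by apply: (gen1_genAB rev_str_two) => a b a0 _; apply: opL_str_two. Qed.

Local Open Scope ring_scope.

Definition mx2 {R : pzRingType} (a b c d : R) : 'M[R]_2 :=
  \matrix_(i, j) if i == 0 then (if j == 0 then a else b) else (if j == 0 then c else d).

Lemma mx2E (R : pzRingType) (A : 'M[R]_2) : A = mx2 (A 0 0) (A 0 1) (A 1 0) (A 1 1).
Proof.
apply/matrixP => -[[|[|i]] Hi] -[[|[|j]] Hj] //; rewrite mxE /=;
  by congr (A _ _); apply: val_inj.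
Qed.

Lemma mx2_mul (R : pzRingType) (a b c d a' b' c' d' : R) :
  mx2 a b c d * mx2 a' b' c' d' =
  mx2 (a * a' + b * c') (a * b' + b * d') (c * a' + d * c') (c * b' + d * d').
Proof.
apply/matrixP => i j; rewrite !mxE !big_ord_recl big_ord0 !mxE addr0 /=.
by case: i => [[|[|]]] //= _; case: j => [[|[|]]].
Qed.

Definition hjmx (c : nat) : 'M[int]_2 := mx2 c%:Z (-1) 1 0.

Lemma hjmxS_l c : hjmx c.+1 = mx2 1 1 0 1 * hjmx c.
Proof. by rewrite /hjmx mx2_mul intS; congr mx2; ring. Qed.

Lemma hjmxS_r c : hjmx c.+1 = hjmx c * mx2 1 0 (-1) 1.
Proof. by rewrite /hjmx mx2_mul intS; congr mx2; ring. Qed.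

Definition contmx (s : seq nat) : 'M[int]_2 := \prod_(c <- s) hjmx c.

Lemma contmx_cons c s : contmx (c :: s) = hjmx c * contmx s.
Proof. by rewrite /contmx big_cons. Qed.

Lemma contmx_rcons s c : contmx (rcons s c) = contmx s * hjmx c.
Proof. by rewrite /contmx big_rcons. Qed.

Lemma contmx_incr_head s : s != [::] -> contmx (incr_head s) = mx2 1 1 0 1 * contmx s.
Proof. by case: s => // c s _; rewrite /= !contmx_cons mulrA -hjmxS_l. Qed.

Lemma contmx_incr_last s : s != [::] -> contmx (incr_last s) = contmx s * mx2 1 0 (-1) 1.
Proof.
by case/lastP: s => // s c _; rewrite incr_last_rcons !contmx_rcons -mulrA -hjmxS_r.
Qed.

Lemma contmx_opL s : s != [::] -> contmx (opL s) = mx2 1 1 0 1 * (contmx s * hjmx 2).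
Proof. by move=> s0; rewrite contmx_rcons contmx_incr_head // mulrA. Qed.

Lemma contmx_opR s : s != [::] -> contmx (opR s) = hjmx 2 * (contmx s * mx2 1 0 (-1) 1).
Proof. by move=> s0; rewrite contmx_cons contmx_incr_last. Qed.

(* Also for [s = [::]], as [hj [::] = 0] and [0^-1 = 0]. *)
Lemma hj_cons c s : hj (c :: s) = c%:R - (hj s)^-1.
Proof. by case: s => [|d s] //=; rewrite invr0 subr0. Qed.

Lemma contmx_hj s : all (fun c => 2 <= c)%N s ->
  0 <= contmx s 1 0 < contmx s 0 0 /\ hj s = (contmx s 0 0)%:~R / (contmx s 1 0)%:~R.
Proof.
elim: s => [|c s IH]; first by rewrite /contmx big_nil !mxE /= invr0 mulr0.
rewrite [all _ _]/= => /andP[c2 /IH[]].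
rewrite hj_cons contmx_cons [contmx s]mx2E /hjmx mx2_mul !mxE /=.
set a := contmx s 0 0; set g := contmx s 1 0 => /andP[g0 ga] ->.
have ca : 2 * a <= c%:Z * a by rewrite ler_wpM2r ?lez_nat //; lia.
split; first by apply/andP; split; lia.
have a0 : a%:~R != 0 :> rat by rewrite intr_eq0; lia.
rewrite invf_div !(mul1r, mul0r, add0r, addr0, mulN1r) intrD intrM pmulrn.
by field.
Qed.

Lemma hj_inv_bounds s : all (fun c => 2 <= c)%N s -> 0 <= (hj s)^-1 < 1.
Proof.
case/contmx_hj=> /andP[g0 ga] ->; rewrite invf_div.
have a0 : 0 < (contmx s 0 0)%:~R :> rat by rewrite ltr0z; lia.
rewrite divr_ge0 ?ler0z //=; last lia.
by rewrite ltr_pdivrMr // mul1r ltr_int.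
Qed.

Lemma hj_cons_gt1 c s : (2 <= c)%N -> all (fun c => 2 <= c)%N s -> 1 < hj (c :: s).
Proof.
move=> c2 /hj_inv_bounds/andP[u0 u1]; rewrite hj_cons.
have : 2 <= c%:R :> rat by rewrite ler_nat.
lra.
Qed.

Lemma hj_inv_eq0 s : all (fun c => 2 <= c)%N s -> ((hj s)^-1 == 0) = (s == [::]).
Proof.
case: s => [|c s]; first by rewrite invr0 eqxx.
by case/andP=> c2 /(hj_cons_gt1 c2) gt1; rewrite invr_eq0 gt_eqF // (lt_trans ltr01).
Qed.

Lemma natr_sub_frac_inj (c d : nat) (u v : rat) :
  0 <= u < 1 -> 0 <= v < 1 -> c%:R - u = d%:R - v -> c = d.
Proof.
move=> /andP[u0 u1] /andP[v0 v1] E; case: (ltngtP c d) => // [cd | dc]; exfalso.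
  have : c.+1%:R <= d%:R :> rat by rewrite ler_nat.
  by rewrite -natr1; lra.
have : d.+1%:R <= c%:R :> rat by rewrite ler_nat.
by rewrite -natr1; lra.
Qed.

Lemma hj_inj : {in hj_string &, injective hj}.
Proof.
move=> s t; rewrite !unfold_in; elim: s t => [|c s IH] [|d t] //.
move=> /andP[_ /andP[c2 s2]] /andP[_ /andP[d2 t2]]; rewrite !hj_cons => E.
have [u_bd v_bd] := (hj_inv_bounds s2, hj_inv_bounds t2).
have cd := natr_sub_frac_inj u_bd v_bd E; subst d.
have uv : (hj s)^-1 = (hj t)^-1 by lra.
have st0 : (s == [::]) = (t == [::]) by rewrite -hj_inv_eq0 // uv hj_inv_eq0.
case: (eqVneq s [::]) st0 => [-> /esym/eqP -> // | s0 t0].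
congr (_ :: _); apply: IH; rewrite ?unfold_in /hj_string ?s0 ?s2 -?t0 ?t2 //.
exact: invr_inj.
Qed.

(* With p = q + r this is [[p^2, -(p(p-q)+e)], [pq+e, -(q(p-q)+e)]], the value of
   [contmx] on the HJ expansion of p^2/(pq+e). *)
Definition pqmx (e q r : int) : 'M[int]_2 :=
  mx2 ((q + r) ^+ 2) (- ((q + r) * r + e)) ((q + r) * q + e) (- (q * r + e)).

Lemma pqmx_opL e q r : mx2 1 1 0 1 * (pqmx e q r * hjmx 2) = pqmx e q (q + r).
Proof. by rewrite /pqmx /hjmx !mx2_mul; congr mx2; ring. Qed.

Lemma pqmx_opR e q r : hjmx 2 * (pqmx e q r * mx2 1 0 (-1) 1) = pqmx e (q + r) r.
Proof. by rewrite /pqmx /hjmx !mx2_mul; congr mx2; ring. Qed.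

Local Close Scope ring_scope.

Lemma hj_pqmx e (q r : nat) s : all (fun c => 2 <= c)%N s -> contmx s = pqmx e q r ->
  hj s = (((q + r) ^ 2)%:R / (((q + r) * q)%:R + e%:~R))%R.
Proof.
move=> /contmx_hj[_ ->] ->; rewrite /pqmx !mxE /=; congr (_ / _)%R.
by rewrite intrD pmulrn.
Qed.

Lemma hj_string_rev s : hj_string (rev s) = hj_string s.
Proof. by rewrite /hj_string rev_eq0 all_rev. Qed.

Lemma hj_string_opL s : hj_string s -> hj_string (opL s).
Proof.
case: s => // c s /andP[_ /= /andP[c2 s2]].
by rewrite /hj_string /opL rcons_neq0 all_rcons /= s2 andbT (leqW c2).
Qed.

Lemma hj_string_opR s : hj_string s -> hj_string (opR s).
Proof. by rewrite opR_rev hj_string_rev -(hj_string_rev s); apply: hj_string_opL. Qed.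

Lemma coprime_ind (P : nat -> nat -> Prop) :
  P 1 1 -> (forall x y, P x y -> P x (x + y)) -> (forall x y, P x y -> P (x + y) y) ->
  forall x y, 0 < x -> 0 < y -> coprime x y -> P x y.
Proof.
move=> P11 PxD PDy x y; have [n] := ubnP (x + y).
elim: n x y => // n IH x y xyn x0 y0 cxy.
case: (ltngtP x y) => [xy|yx|xy].
- rewrite -(subnKC (ltnW xy)) in cxy *; rewrite /coprime gcdnDl in cxy.
  apply/PxD/IH; rewrite ?subn_gt0 //; lia.
- rewrite -(subnK (ltnW yx)) in cxy *; rewrite /coprime gcdnC gcdnDr gcdnC in cxy.
  apply/PDy/IH; rewrite ?subn_gt0 //; lia.
- by move: cxy; rewrite -xy /coprime gcdnn => /eqP ->.
Qed.

Section GeneratedFamily.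

Variables (e : int) (s0 : seq nat).
Hypotheses (s0_hj : hj_string s0) (contmx_s0 : contmx s0 = pqmx e 1 1).

Lemma gen1_pqmx s : gen1 s0 s ->
  hj_string s /\ exists q r, [/\ 0 < q, 0 < r, coprime q r & contmx s = pqmx e q r].
Proof.
elim=> [|{}s _ [hs [q [r [q0 r0 cqr E]]]]|{}s _ [hs [q [r [q0 r0 cqr E]]]]].
- by split=> //; exists 1, 1.
- have [s_neq0 _] := andP hs; split; first exact: hj_string_opL.
  exists q, (q + r); split; rewrite ?addn_gt0 ?q0 //; first by rewrite /coprime gcdnDl.
  by rewrite contmx_opL // E PoszD pqmx_opL.
- have [s_neq0 _] := andP hs; split; first exact: hj_string_opR.
  exists (q + r), r; split; rewrite ?addn_gt0 ?q0 //.
    by rewrite /coprime gcdnC gcdnDr gcdnC.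
  by rewrite contmx_opR // E PoszD pqmx_opR.
Qed.

Lemma pqmx_gen1 q r : 0 < q -> 0 < r -> coprime q r ->
  exists2 s, gen1 s0 s & contmx s = pqmx e q r.
Proof.
move: q r.
apply: (coprime_ind (P := fun q r => exists2 s, gen1 s0 s & contmx s = pqmx e q r)).
  by exists s0 => //; apply: gen1_start.
all: move=> x y [s gs E].
- have [/andP[s_neq0 _] _] := gen1_pqmx gs.
  by exists (opL s); [apply: gen1_L | rewrite contmx_opL // E PoszD pqmx_opL].
- have [/andP[s_neq0 _] _] := gen1_pqmx gs.
  by exists (opR s); [apply: gen1_R | rewrite contmx_opR // E PoszD pqmx_opR].
Qed.

Lemma gen1_hj_iff s : gen1 s0 s <-> hj_string s /\ exists p q : nat,
  [/\ 0 < q, q < p, coprime p q & hj s = ((p ^ 2)%:R / ((p * q)%:R + e%:~R))%R].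
Proof.
split.
  move=> /gen1_pqmx[hs [q [r [q0 r0 cqr E]]]]; split=> //; exists (q + r), q.
  split=> //; first lia.
    by rewrite /coprime gcdnC gcdnDl.
  by apply: hj_pqmx E; case/andP: hs.
move=> [hs [p [q [q0 qp cpq E]]]].
have [|||t gt Et] := @pqmx_gen1 q (p - q); rewrite ?subn_gt0 //.
  by rewrite /coprime -gcdnDl subnKC 1?gcdnC // (ltnW qp).
have [ht _] := gen1_pqmx gt.
suff -> : s = t by [].
apply: hj_inj; rewrite ?unfold_in // E (hj_pqmx _ Et); last by case/andP: ht.
by rewrite subnKC // (ltnW qp).
Qed.

End GeneratedFamily.

Theorem lemma3p3 :
  (forall s : seq nat, S1 s <-> S2 s) /\
  (forall s : seq nat, S1 s <-> HJminus s) /\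
  (forall s : seq nat, T1 s <-> HJplus s) /\
  (forall s : seq nat, T2 s <-> HJplus s).
Proof.
have contmx4 : contmx [:: 4] = pqmx (-1) 1 1.
  by rewrite /contmx big_seq1 /hjmx /pqmx; congr mx2.
have contmx222 : contmx [:: 2; 2; 2] = pqmx 1 1 1.
  by rewrite /contmx !big_cons big_nil mulr1 /hjmx /pqmx !mx2_mul; congr mx2.
have S1_HJminus s : S1 s <-> HJminus s.
  by rewrite /S1 (gen1_hj_iff _ contmx4) // rmorphN1.
have T1_HJplus s : T1 s <-> HJplus s.
  by rewrite /T1 (gen1_hj_iff _ contmx222) // rmorph1.
split; first exact: S1_S2.
split; first exact: S1_HJminus.
split; first exact: T1_HJplus.
by move=> s; rewrite -T1_T2 T1_HJplus.
Qed.
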